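(* Let $(\sigma,\rho)$ and $(\nu,\varrho)$ be two $G$-compatible pairs. The lattices $L_{(\sigma,\rho)}=\sigma^{-1}\mathbb Z^n\rtimes_\eta\rho\mathbb Z^m$ and $L_{(\nu,\varrho)}=\nu^{-1}\mathbb Z^n\rtimes_\eta\varrho\mathbb Z^m$ are commensurable if and only if $$\left(\mathrm{rank}_{\mathbb Z}(\sigma^{-1}\mathbb Z^n\cap\nu^{-1}\mathbb Z^n),\ \mathrm{rank}_{\mathbb Z}(\rho\mathbb Z^m\cap\varrho\mathbb Z^m)\right)=(n,m).$$
   Context: Fix integers $1\le m\le n$. Let $\Delta_1,\dots,\Delta_m\in\mathbb R^{n\times n}$ be linearly independent, nonsingular, traceless diagonal matrices $\Delta_i=\mathrm{diag}(d_1^{(i)},\dots,d_n^{(i)})$ such that for each $i$, $d_k^{(i)}\neq d_j^{(i)}$ whenever $k\neq j$. For $t=(t_1,\dots,t_m)^T\in\mathbb R^m$ write $t\cdot\Delta=\sum_{i=1}^m t_i\Delta_i$ and $\eta(t)=e^{t\cdot\Delta}$. Let $G=\mathbb R^n\rtimes_\eta\mathbb R^m$ be the Lie group with underlying set $\mathbb R^n\times\mathbb R^m$ and multiplication $(x,t)(y,s)=(x+e^{t\cdot\Delta}y,\ t+s)$. A pair $(\sigma,\rho)\in GL_n(\mathbb R)\times GL_m(\mathbb R)$ is called $G$-compatible if $\sigma\exp(\rho^{(j)}\cdot\Delta)\sigma^{-1}\in SL_n(\mathbb Z)$ for all $j=1,\dots,m$, where $\rho^{(j)}$ is the $j$-th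 column of $\rho$. For such a pair, $\sigma^{-1}\mathbb Z^n\rtimes_\eta\rho\mathbb Z^m$ denotes the subgroup $\{(\sigma^{-1}v,\rho p): v\in\mathbb Z^n, p\in\mathbb Z^m\}$ of $G$, which is a lattice. Two lattices $\Gamma,\Gamma'$ in $G$ are commensurable if $[\Gamma:\Gamma\cap\Gamma']<\infty$ and $[\Gamma':\Gamma\cap\Gamma']<\infty$. *)

From HB Require Import structures.
From mathcomp Require Import all_boot all_order all_algebra.
From mathcomp Require Import all_classical all_reals all_analysis.
Set Implicit Arguments. Unset Strict Implicit. Unset Printing Implicit Defensive.
Import Order.TTheory GRing.Theory Num.Theory.
Local Open Scope ring_scope.
Local Open Scope classical_set_scope.

Section Defs.
Variable R : realType.

Definition Delta (n m : nat) (D : 'M[R]_(m, n)) (i : 'I_m) : 'M[R]_n :=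
  diag_mx (row i D).

Definition tDelta (n m : nat) (D : 'M[R]_(m, n)) (t : 'cV[R]_m) : 'M[R]_n :=
  \sum_(i < m) t i 0 *: Delta D i.

(* Exponential of a diagonal matrix: entrywise exponential on the diagonal
   (this is exactly the matrix exponential for a diagonal matrix). *)
Definition expdiag (n : nat) (A : 'M[R]_n) : 'M[R]_n :=
  diag_mx (\row_k expR (A k k)).

Definition eta (n m : nat) (D : 'M[R]_(m, n)) (t : 'cV[R]_m) : 'M[R]_n :=
  expdiag (tDelta D t).

Definition inSLZ (n : nat) (A : 'M[R]_n) : Prop :=
  (forall i j, A i j \is a Num.int) /\ \det A = 1.

Definition intcol (k : nat) (v : 'cV[R]_k) : Prop :=
  forall i, v i 0 \is a Num.int.

Definition compatible (n m : nat) (D : 'M[R]_(m, n))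
  (sigma : 'M[R]_n) (rho : 'M[R]_m) : Prop :=
  [/\ sigma \in unitmx, rho \in unitmx &
      forall j : 'I_m, inSLZ (sigma *m eta D (col j rho) *m invmx sigma)].

Definition Gmul (n m : nat) (D : 'M[R]_(m, n))
  (g h : 'cV[R]_n * 'cV[R]_m) : 'cV[R]_n * 'cV[R]_m :=
  (g.1 + eta D g.2 *m h.1, g.2 + h.2).

Definition latt (n m : nat) (sigma : 'M[R]_n) (rho : 'M[R]_m)
  : set ('cV[R]_n * 'cV[R]_m) :=
  [set g | exists v p, [/\ intcol v, intcol p & g = (invmx sigma *m v, rho *m p)]].

Definition finite_index (n m : nat) (D : 'M[R]_(m, n))
  (Gam H : set ('cV[R]_n * 'cV[R]_m)) : Prop :=
  exists s : seq ('cV[R]_n * 'cV[R]_m),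
    (forall h, h \in s -> Gam h) /\
    (forall g, Gam g -> exists2 h, h \in s & exists k, H k /\ g = Gmul D h k).

Definition commensurable (n m : nat) (D : 'M[R]_(m, n))
  (Gam Gam' : set ('cV[R]_n * 'cV[R]_m)) : Prop :=
  finite_index D Gam (Gam `&` Gam') /\ finite_index D Gam' (Gam `&` Gam').

Definition Zspan (k : nat) (A : 'M[R]_k) : set 'cV[R]_k :=
  [set w | exists v, intcol v /\ w = A *m v].

Definition Zindep (k r : nat) (f : 'I_r -> 'cV[R]_k) : Prop :=
  forall c : 'I_r -> int, \sum_(i < r) (c i)%:~R *: f i = 0 -> forall i, c i = 0.

Definition Zrank (k : nat) (S : set 'cV[R]_k) (r : nat) : Prop :=
  (exists f : 'I_r -> 'cV[R]_k, (forall i, S (f i)) /\ Zindep f) /\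
  (forall f : 'I_r.+1 -> 'cV[R]_k, (forall i, S (f i)) -> ~ Zindep f).

End Defs.

(* If Gamma `&` Gamma' has finite index in Gamma = sigma^-1 Z^n x| rho Z^m,
   then by pigeonhole every generator (e_j, 0) or (0, f_j) of Gamma has a
   positive multiple in the intersection, so both intersections of lattices
   have full rank.  Conversely, a full-rank subgroup of a lattice A Z^k
   contains N A Z^k for some N > 0 (Cramer's rule), hence the intersection
   contains N sigma^-1 Z^n x| N' rho Z^m, whose left cosets in Gamma are
   represented by residue vectors modulo N and N'.  Compatibility makes
   sigma e^{t.Delta} sigma^-1 integral for t in rho Z^m, so e^{t.Delta}
   preserves sigma^-1 Z^n and each lattice is a subgroup of G. *)
From Pilot Require Import Defs.
From HB Require Import structures.
From mathcomp Require Import all_boot all_order all_algebra.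
From mathcomp Require Import all_classical all_reals all_analysis.
Import Order.TTheory GRing.Theory Num.Theory.
Set Implicit Arguments. Unset Strict Implicit. Unset Printing Implicit Defensive.
Local Open Scope ring_scope.
Local Open Scope classical_set_scope.

Section IntegerMatrices.
Variable R : archiNumDomainType.
Local Notation intmx := (mxOver (@Num.int R)).

Lemma det_intmx k (A : 'M[R]_k) : A \is a intmx -> \det A \is a Num.int.
Proof.
move=> /mxOverP Aint; apply: rpred_sum => s _; rewrite rpredMsign.
by apply: rpred_prod => i _; apply: Aint.
Qed.

Lemma adj_intmx k (A : 'M[R]_k) : A \is a intmx -> \adj A \is a intmx.
Proof.
move=> /mxOverP Aint; apply/mxOverP => i j; rewrite mxE rpredMsign.
by apply: det_intmx; apply/mxOverP => a b; rewrite !mxE.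
Qed.

Lemma invmx_intmx k (A : 'M[R]_k) :
  A \is a intmx -> \det A = 1 -> invmx A \is a intmx.
Proof.
by move=> Aint detA1; rewrite /invmx unitmxE detA1 unitr1 invr1 scale1r adj_intmx.
Qed.

End IntegerMatrices.

Lemma rat_row_denominator r (u : 'rV[rat]_r) :
  exists2 d : int, d != 0 & d%:~R *: u \is a mxOver Num.int.
Proof.
pose d := \prod_(j < r) denq (u 0 j).
exists d; first by apply/prodf_neq0 => j _; apply: denq_neq0.
apply/mxOverP => i j; rewrite mxE (ord1 i) mulrC [d](bigD1 j) //= rmorphM mulrA.
by rewrite -numqE -rmorphM intr_int.
Qed.

Section IntegralSpans.
Variables (R : realType) (k : nat).
Implicit Types (S T : set 'cV[R]_k) (A : 'M[R]_k) (x y v : 'cV[R]_k).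

Lemma intcolP v : intcol v <-> v \is a mxOver Num.int.
Proof.
split=> [vint | /mxOverP vint i]; last exact: vint.
by apply/mxOverP => i j; rewrite (ord1 j).
Qed.

Definition Zclosed S := S 0 /\ forall x y, S x -> S y -> S (x - y).

Lemma ZclosedN S x : Zclosed S -> S x -> S (- x).
Proof. by move=> [S0 SB] Sx; rewrite -sub0r; apply: SB. Qed.

Lemma ZclosedD S x y : Zclosed S -> S x -> S y -> S (x + y).
Proof.
by move=> Sz Sx Sy; rewrite -[y]opprK; apply: Sz.2 => //; apply: ZclosedN.
Qed.

Lemma ZclosedZ S (z : int) x : Zclosed S -> S x -> S (z%:~R *: x).
Proof.
move=> Sz Sx; have SXn a : S (x *+ a).
  elim: a => [|a IHa]; first by rewrite mulr0n; exact: Sz.1.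
  by rewrite mulrSr; apply: ZclosedD.
rewrite scaler_int; case: z => a; first exact: SXn.
by rewrite NegzE mulrNz; apply: ZclosedN => //; apply: SXn.
Qed.

Lemma Zclosed_sum S r (c : 'I_r -> int) (f : 'I_r -> 'cV[R]_k) :
  Zclosed S -> (forall i, S (f i)) -> S (\sum_(i < r) (c i)%:~R *: f i).
Proof.
move=> Sz Sf; apply: (big_ind S) => [|x y|i _]; first exact: Sz.1.
  exact: ZclosedD.
exact: ZclosedZ.
Qed.

Lemma ZclosedI S T : Zclosed S -> Zclosed T -> Zclosed (S `&` T).
Proof.
move=> [S0 SB] [T0 TB]; split=> // x y [Sx Tx] [Sy Ty].
by split; [apply: SB | apply: TB].
Qed.

Lemma Zclosed_Zspan A : Zclosed (Zspan A).
Proof.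
split; first by exists 0; split=> [i|]; rewrite ?mulmx0 // mxE.
move=> _ _ [v [vint ->]] [w [wint ->]]; exists (v - w); rewrite mulmxBr.
by split=> // i; rewrite !mxE rpredB.
Qed.

Lemma Zspan_col A j : Zspan A (col j A).
Proof.
exists (delta_mx j 0); split; last exact: colE.
by move=> i; rewrite mxE; case: (_ && _).
Qed.

Lemma mulmx_sum_col A v : A *m v = \sum_(j < k) v j 0 *: col j A.
Proof.
apply/matrixP => a b; rewrite (ord1 b) summxE !mxE.
by apply: eq_bigr => j _; rewrite !mxE mulrC.
Qed.

Lemma Zspan_sub S A : Zclosed S -> (forall j, S (col j A)) -> Zspan A `<=` S.
Proof.
move=> Sz Scol _ [v [vint ->]]; rewrite mulmx_sum_col.
under eq_bigr => j _ do rewrite -(floorK (vint j)).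
exact: Zclosed_sum.
Qed.

End IntegralSpans.

Section IntegralIndependence.
Variables (R : realType) (k : nat).
Implicit Types (S : set 'cV[R]_k) (A : 'M[R]_k).

Definition rowsmx r (f : 'I_r -> 'cV[R]_k) : 'M[R]_(r, k) :=
  \matrix_(i, j) f i j 0.

Lemma mul_row_rowsmx r (a : 'I_r -> R) (f : 'I_r -> 'cV[R]_k) :
  \row_i a i *m rowsmx f = (\sum_(i < r) a i *: f i)^T.
Proof.
rewrite mulmx_sum_row linear_sum; apply: eq_bigr => i _ /=.
by rewrite mxE linearZ; congr (_ *: _); apply/rowP => j; rewrite !mxE.
Qed.

Lemma not_Zindep_int r (f : 'I_r -> 'cV[R]_k) :
  (forall i, intcol (f i)) -> ~~ row_free (rowsmx f) -> ~ Zindep f.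
Proof.
move=> fint.
pose F := \matrix_(i, j) (Num.floor (f i j 0))%:~R : 'M[rat]_(r, k).
have FR : map_mx ratr F = rowsmx f.
  by apply/matrixP => i j; rewrite !mxE ratr_int floorK //; apply: fint.
rewrite -FR row_free_map -kermx_eq0 => /rowV0Pn [u /sub_kermxP uF0 u0].
have [d d0 /mxOverP dUint] := rat_row_denominator u.
pose c i := Num.floor (d%:~R * u 0 i).
have cE i : (c i)%:~R = d%:~R * u 0 i :> rat.
  by rewrite floorK //; have := dUint 0 i; rewrite mxE.
have sum0 : \sum_(i < r) (c i)%:~R *: f i = 0.
  apply: trmx_inj; rewrite trmx0 -mul_row_rowsmx -FR.
  have -> : \row_i (c i)%:~R = map_mx ratr (d%:~R *: u) :> 'rV[R]_r.
    by apply/rowP => i; rewrite !mxE -cE ratr_int.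
  by rewrite -map_mxM -scalemxAl uF0 scaler0 map_mx0.
move=> /(_ c sum0) c0; case/eqP: u0; apply/rowP => i; rewrite mxE.
have := cE i; rewrite c0 mulr0z => /esym/eqP.
by rewrite mulf_eq0 intr_eq0 (negPf d0) => /eqP.
Qed.

Lemma Zindep_mulmx l r (A : 'M[R]_(l, k)) (f : 'I_r -> 'cV[R]_k) :
  Zindep (fun i => A *m f i) -> Zindep f.
Proof.
move=> Af c /(congr1 (mulmx A)); rewrite mulmx0 mulmx_sumr => sum0; apply: Af.
by rewrite -[RHS]sum0; apply: eq_bigr => i _; rewrite scalemxAr.
Qed.

Lemma Zindep_scaled_cols A (N : 'I_k -> nat) :
  A \in unitmx -> (forall j, (0 < N j)%N) -> Zindep (fun j => (N j)%:R *: col j A).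
Proof.
move=> Aunit Npos c sum0 j.
have : A *m \col_i ((c i)%:~R * (N i)%:R) = 0.
  by rewrite mulmx_sum_col -[RHS]sum0; apply: eq_bigr => i _; rewrite mxE scalerA.
move=> /(congr1 (mulmx (invmx A))); rewrite mulKmx // mulmx0.
move=> /matrixP /(_ j 0); rewrite !mxE => /eqP.
by rewrite mulf_eq0 pnatr_eq0 intr_eq0 eqn0Ngt Npos orbF => /eqP.
Qed.

Lemma Zspan_not_Zindep A (f : 'I_k.+1 -> 'cV[R]_k) :
  (forall i, Zspan A (f i)) -> ~ Zindep f.
Proof.
move=> /boolp.choice [w wP]; have -> : f = fun i => A *m w i.
  by apply: boolp.funext => i; case: (wP i).
move/Zindep_mulmx; apply: not_Zindep_int => [i|]; first by case: (wP i).
by rewrite /row_free neq_ltn ltnS rank_leq_col.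
Qed.

Lemma Zrank_full S A : A \in unitmx -> S `<=` Zspan A ->
  (forall j, exists N : nat, (0 < N)%N /\ S (N%:R *: col j A)) -> Zrank S k.
Proof.
move=> Aunit SA /boolp.choice [N NP].
split=> [|f Sf]; last by apply: Zspan_not_Zindep => i; apply/SA/Sf.
exists (fun j => (N j)%:R *: col j A); split=> [j|]; first by case: (NP j).
by apply: Zindep_scaled_cols => // j; case: (NP j).
Qed.

Lemma full_Zrank_scaled_sub S A :
  Zclosed S -> S `<=` Zspan A -> Zrank S k ->
  exists N : nat, (0 < N)%N /\ forall v, intcol v -> S (N%:R *: (A *m v)).
Proof.
move=> Sz SA [[f [Sf findep]] _].
have /boolp.choice [w wP] : forall i, Zspan A (f i) by move=> i; apply/SA/Sf.
have fE : f = fun i => A *m w i by apply: boolp.funext => i; case: (wP i).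
have wint i : intcol (w i) by case: (wP i).
pose W := (rowsmx w)^T.
have colW j : col j W = w j by apply/matrixP => i b; rewrite (ord1 b) !mxE.
have Wint : W \is a mxOver Num.int.
  by apply/mxOverP => i j; rewrite !mxE; apply: wint.
pose d := \det W.
have d_neq0 : d != 0.
  apply: contraPneq findep => d0; rewrite fE => /Zindep_mulmx.
  apply: not_Zindep_int => //.
  by rewrite row_free_unit unitmxE unitfE -det_tr -/W -/d d0 eqxx.
have dS v : intcol v -> S (d *: (A *m v)).
  move=> vint; pose y := \adj W *m v.
  have yint : intcol y.
    by apply/intcolP; apply: mxOverM; [exact: adj_intmx | exact/intcolP].
  have -> : d *: (A *m v) = \sum_i (Num.floor (y i 0))%:~R *: f i.
    have Wy : W *m y = d *: v by rewrite mulmxA mul_mx_adj mul_scalar_mx.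
    rewrite scalemxAr -Wy (mulmx_sum_col W) fE mulmx_sumr.
    by apply: eq_bigr => i _; rewrite floorK // colW scalemxAr.
  by apply: Zclosed_sum.
(* [d ^+ 2] rather than [d], so that the multiple is a natural number. *)
have d2_nat : d ^+ 2 \is a Num.nat by apply: natr_exp_even => //; apply: det_intmx.
exists (Num.trunc (d ^+ 2)); split.
  by rewrite -(ltr_nat R) truncnK // exprn_even_gt0 // d_neq0 orbT.
move=> v vint; rewrite truncnK // expr2 -scalerA scalemxAr; apply: dS.
by move=> i; rewrite mxE rpredM //; apply: det_intmx.
Qed.

End IntegralIndependence.

Section SpecialLinearZ.
Variables (R : realType) (n : nat).
Implicit Types A B : 'M[R]_n.

Lemma inSLZ1 : inSLZ (1%:M : 'M[R]_n).
Proof. by split; [apply/mxOverP/mxOver_scalar | rewrite det1]. Qed.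

Lemma inSLZ_mul A B : inSLZ A -> inSLZ B -> inSLZ (A *m B).
Proof.
move=> [/mxOverP Aint detA] [/mxOverP Bint detB].
by split; [apply/mxOverP/mxOverM | rewrite det_mulmx detA detB mulr1].
Qed.

Lemma inSLZ_inv A : inSLZ A -> inSLZ (invmx A).
Proof.
move=> [/mxOverP Aint detA].
by split; [apply/mxOverP/invmx_intmx | rewrite det_inv detA invr1].
Qed.

End SpecialLinearZ.

Section SemidirectProduct.
Variables (R : realType) (n m : nat) (D : 'M[R]_(m, n)).
Local Notation G := ('cV[R]_n * 'cV[R]_m)%type.
Implicit Types (g h k : G) (s : 'M[R]_n) (r : 'M[R]_m).

Lemma etaD a b : Defs.eta D (a + b) = Defs.eta D a *m Defs.eta D b.
Proof.
rewrite /Defs.eta /expdiag mulmx_diag; congr diag_mx; apply/rowP => i.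
rewrite !mxE -expRD /tDelta !summxE -big_split; congr expR.
by apply: eq_bigr => j _; rewrite !mxE mulrDl.
Qed.

Lemma eta0 : Defs.eta D 0 = 1%:M.
Proof.
rewrite /Defs.eta /expdiag -diag_const_mx; congr diag_mx; apply/rowP => i.
by rewrite !mxE /tDelta summxE big1 ?expR0 // => j _; rewrite !mxE mul0r.
Qed.

Definition Ginv g : G := (- (Defs.eta D (- g.2) *m g.1), - g.2).

(* On goals containing [Defs.eta], [/=] and exhaustive [!]-rewrites can loop
   (unification unfolds [expR]): projections are reduced with [cbn [fst snd]]
   and rewrites are given explicit occurrences. *)

Lemma Gmul_GinvE g h :
  Gmul D (Ginv g) h = (Defs.eta D (- g.2) *m (h.1 - g.1), h.2 - g.2).
Proof.
by rewrite /Gmul /Ginv; cbn [fst snd]; rewrite mulmxBr; congr pair; rewrite addrC.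
Qed.

Lemma Gmul_Ginv_mul2l h g g' :
  Gmul D (Ginv (Gmul D h g)) (Gmul D h g') = Gmul D (Ginv g) g'.
Proof.
rewrite [LHS]Gmul_GinvE [RHS]Gmul_GinvE /Gmul; cbn [fst snd]; congr pair.
  rewrite [h.1 + _ *m g'.1]addrC addrKA -mulmxBr (addrC h.2) opprD etaD -mulmxA.
  by rewrite (mulmxA (Defs.eta D (- h.2))) -etaD addNr eta0 mul1mx.
by rewrite (addrC h.2 g'.2) addrKA.
Qed.

Lemma Gmul_Ginv_pair_l u v : Gmul D (Ginv (u, 0)) (v, 0) = (v - u, 0).
Proof. by rewrite Gmul_GinvE; cbn [fst snd]; rewrite oppr0 addr0 eta0 mul1mx. Qed.

Lemma Gmul_Ginv_pair_r t t' : Gmul D (Ginv (0, t)) (0, t') = (0, t' - t).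
Proof. by rewrite Gmul_GinvE; cbn [fst snd]; rewrite subr0 mulmx0. Qed.

Definition conj_eta s t := s *m Defs.eta D t *m invmx s.

Lemma conj_etaD s a b : s \in unitmx ->
  conj_eta s (a + b) = conj_eta s a *m conj_eta s b.
Proof.
move=> sunit; rewrite /conj_eta etaD !mulmxA; congr (_ *m _).
by rewrite -[_ *m invmx s *m s]mulmxA mulVmx // mulmx1.
Qed.

Lemma conj_etaN s t : s \in unitmx -> conj_eta s (- t) = invmx (conj_eta s t).
Proof.
move=> sunit; have C1 : conj_eta s t *m conj_eta s (- t) = 1%:M.
  by rewrite -conj_etaD // subrr /conj_eta eta0 mulmx1 mulmxV.
have [Cunit _] := mulmx1_unit C1.
by rewrite -[LHS]mul1mx -(mulVmx Cunit) -mulmxA C1 mulmx1.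
Qed.

Lemma compatible_conj_inSLZ s r t :
  compatible D s r -> Zspan r t -> inSLZ (conj_eta s t).
Proof.
move=> [sunit _ colSLZ]; move: t.
apply: (Zspan_sub (S := fun t => inSLZ (conj_eta s t))) => //; split; cbv beta.
  by rewrite /conj_eta eta0 mulmx1 mulmxV //; apply: inSLZ1.
move=> a b Ca Cb; rewrite conj_etaD // conj_etaN //.
by apply: inSLZ_mul => //; apply: inSLZ_inv.
Qed.

Lemma eta_Zspan s r t x : compatible D s r -> Zspan r t ->
  Zspan (invmx s) x -> Zspan (invmx s) (Defs.eta D t *m x).
Proof.
move=> sr rt [v [vint ->]]; have sunit : s \in unitmx by case: sr.
have [/mxOverP Cint _] := compatible_conj_inSLZ sr rt.
exists (conj_eta s t *m v); split; first by apply/intcolP/mxOverM => //; apply/intcolP.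
by rewrite /conj_eta !mulmxA mulVmx // mul1mx.
Qed.

Lemma lattE s r g : latt s r g <-> Zspan (invmx s) g.1 /\ Zspan r g.2.
Proof.
split=> [[v [p [vint pint ->]]] | ]; first by split; [exists v | exists p].
by case: g => g1 g2 [[v [vint /= ->]] [p [pint /= ->]]]; exists v, p.
Qed.

Lemma latt_Gmul_Ginv s r g h : compatible D s r ->
  latt s r g -> latt s r h -> latt s r (Gmul D (Ginv g) h).
Proof.
move=> sr /lattE [g1 g2] /lattE [h1 h2]; rewrite Gmul_GinvE; apply/lattE.
split; last exact: (Zclosed_Zspan r).2.
apply: eta_Zspan sr _ _; first exact: ZclosedN (Zclosed_Zspan r) g2.
exact: (Zclosed_Zspan _).2.
Qed.

End SemidirectProduct.

Lemma seq_pigeonhole (T : eqType) (s : seq T) (P : nat -> T -> Prop) :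
  (forall a, exists2 h, h \in s & P a h) ->
  exists a b, (a < b)%N /\ exists h, P a h /\ P b h.
Proof.
move=> Ps; have /boolp.choice [h hP] : forall a, exists h, h \in s /\ P a h.
  by move=> a; have [x xs Pax] := Ps a; exists x.
pose F (a : 'I_(size s).+1) : 'I_(size s) :=
  Ordinal (etrans (index_mem (h a) s) (proj1 (hP a))).
have /injectivePn [a [b ab Fab]] : ~~ injectiveb F.
  by apply/injectiveP => /leq_card; rewrite !card_ord ltnn.
have hab : h a = h b.
  have /(congr1 (nth (h a) s)) := congr1 val Fab.
  by rewrite /= !nth_index //; [exact: (hP b).1 | exact: (hP a).1].
have P_h c : P c (h c) := (hP c).2.
have [lt_ab | lt_ba | eq_ab] := ltngtP a b; last by case/eqP: ab; apply: val_inj.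
  by exists a, b; split=> //; exists (h a); rewrite {2}hab; split; apply: P_h.
by exists b, a; split=> //; exists (h a); rewrite {1}hab; split; apply: P_h.
Qed.

Section CommensurableToRank.
Variables (R : realType) (n m : nat) (D : 'M[R]_(m, n)).
Local Notation G := ('cV[R]_n * 'cV[R]_m)%type.

Lemma finite_index_multiple k (Gam H : set G) (phi : 'cV[R]_k -> G) x :
  finite_index D Gam H ->
  (forall g h, H g -> H h -> H (Gmul D (Ginv D g) h)) ->
  (forall u v, Gmul D (Ginv D (phi u)) (phi v) = phi (v - u)) ->
  (forall a : nat, Gam (phi (a%:R *: x))) ->
  exists N : nat, (0 < N)%N /\ H (phi (N%:R *: x)).
Proof.
move=> [s [_ cover]] H_Gmul_Ginv phiB Gam_phi.
have [a [b [lt_ab [h [[ka [Hka eka]] [kb [Hkb ekb]]]]]]] :=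
  seq_pigeonhole (fun a => cover _ (Gam_phi a)).
exists (b - a)%N; split; first by rewrite subn_gt0.
rewrite natrB 1?ltnW // scalerBl -phiB eka ekb Gmul_Ginv_mul2l.
exact: H_Gmul_Ginv.
Qed.

Lemma finite_index_full_Zrank s r nu vr :
  compatible D s r -> compatible D nu vr ->
  finite_index D (latt s r) (latt s r `&` latt nu vr) ->
  Zrank (Zspan (invmx s) `&` Zspan (invmx nu)) n /\ Zrank (Zspan r `&` Zspan vr) m.
Proof.
move=> sr nuvr fi; have [sunit runit _] := sr.
set H := latt s r `&` latt nu vr in fi *.
have H_Gmul_Ginv g h : H g -> H h -> H (Gmul D (Ginv D g) h).
  by move=> [g1 g2] [h1 h2]; split; apply: latt_Gmul_Ginv.
split.
  apply: (Zrank_full (A := invmx s)) => [|x []//|j]; first by rewrite unitmx_inv.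
  have [|N [N_gt0 [/lattE [HN _] /lattE [HN' _]]]] :=
    finite_index_multiple (x := col j (invmx s)) fi H_Gmul_Ginv
      (@Gmul_Ginv_pair_l _ _ _ D).
    move=> a; apply/lattE; split; last exact: (Zclosed_Zspan r).1.
    exact: (ZclosedZ a (Zclosed_Zspan _) (Zspan_col _ j)).
  by exists N.
apply: (Zrank_full (A := r)) => [//|x []//|j].
have [|N [N_gt0 [/lattE [_ HN] /lattE [_ HN']]]] :=
  finite_index_multiple (x := col j r) fi H_Gmul_Ginv (@Gmul_Ginv_pair_r _ _ _ D).
  move=> a; apply/lattE; split; first exact: (Zclosed_Zspan _).1.
  exact: (ZclosedZ a (Zclosed_Zspan _) (Zspan_col _ j)).
by exists N.
Qed.

End CommensurableToRank.

Lemma intcol_divmod (R : realType) k (N : nat) (v : 'cV[R]_k) :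
  (0 < N)%N -> intcol v ->
  exists w, intcol w /\ exists rem : {ffun 'I_k -> 'I_N},
    v = N%:R *: w + \col_i (rem i : nat)%:R.
Proof.
move=> N_gt0 vint.
have /boolp.choice [qr qrP] : forall i, exists qr : int * 'I_N,
    v i 0 = N%:R * qr.1%:~R + (qr.2 : nat)%:R.
  move=> i; set z := Num.floor (v i 0).
  have mod_ge0 : (0 <= z %% N)%Z by rewrite modz_ge0 // -lt0n.
  have mod_lt : (`|(z %% N)%Z| < N)%N by rewrite -ltz_nat gez0_abs // ltz_pmod.
  exists ((z %/ N)%Z, Ordinal mod_lt) => /=.
  rewrite -[v i 0](floorK (vint i)) -/z {1}(divz_eq z N) intrD intrM mulrC.
  by rewrite -[in LHS](gez0_abs mod_ge0).
exists (\col_i (qr i).1%:~R); split; first by move=> i; rewrite mxE intr_int.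
exists [ffun i => (qr i).2]; apply/matrixP => i b.
by rewrite (ord1 b) !mxE ffunE; apply: qrP.
Qed.

Section RankToCommensurable.
Variables (R : realType) (n m : nat) (D : 'M[R]_(m, n)).
Local Notation G := ('cV[R]_n * 'cV[R]_m)%type.

Lemma finite_index_sub (Gam H H' : set G) :
  finite_index D Gam H -> H `<=` H' -> finite_index D Gam H'.
Proof.
move=> [s [sGam cover]] HH'; exists s; split=> // g /cover [h hs [k [Hk ->]]].
by exists h => //; exists k; split => //; apply: HH'.
Qed.

Lemma finite_index_latt_scaled s r (N N' : nat)
    (S1 : set 'cV[R]_n) (S2 : set 'cV[R]_m) :
  compatible D s r -> (0 < N)%N -> (0 < N')%N ->
  (forall v, intcol v -> S1 (N%:R *: (invmx s *m v))) ->
  (forall p, intcol p -> S2 (N'%:R *: (r *m p))) ->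
  finite_index D (latt s r) [set g | S1 g.1 /\ S2 g.2].
Proof.
move=> sr N_gt0 N'_gt0 S1N S2N'; have sunit : s \in unitmx by case: sr.
pose rem_col k M (f : {ffun 'I_k -> 'I_M}) : 'cV[R]_k := \col_i (f i : nat)%:R.
have rem_col_int k M (f : {ffun 'I_k -> 'I_M}) : intcol (rem_col k M f).
  by move=> i; rewrite mxE natr_int.
(* (sigma^-1 v, rho p) = rep (p0, v0) * (N sigma^-1 w, N' rho q), where p0 is
   the residue of p mod N' and v0 that of sigma e^{-rho p0 . Delta} sigma^-1 v
   mod N. *)
pose rep (x : {ffun 'I_m -> 'I_N'} * {ffun 'I_n -> 'I_N}) : G :=
  (Defs.eta D (r *m rem_col _ _ x.1) *m (invmx s *m rem_col _ _ x.2),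
   r *m rem_col _ _ x.1).
exists (map rep (enum predT)).
split=> [_ /mapP [x _ ->] | [_ _] /lattE [[v [vint /= ->]] [p [pint /= ->]]]].
  apply/lattE; split; last by exists (rem_col _ _ x.1).
  by apply: eta_Zspan sr _ _; [exists (rem_col _ _ x.1) | exists (rem_col _ _ x.2)].
have [q [qint [p0 pE]]] := intcol_divmod N'_gt0 pint.
set t0 := r *m rem_col _ _ p0.
have t0_span : Zspan r (- t0).
  by apply: ZclosedN (Zclosed_Zspan r) _; exists (rem_col _ _ p0).
have [/mxOverP Cint _] := compatible_conj_inSLZ sr t0_span.
have Cvint : intcol (conj_eta D s (- t0) *m v).
  by apply/intcolP/mxOverM => //; apply/intcolP.
have [w [wint [v0 vE]]] := intcol_divmod N_gt0 Cvint.
exists (rep (p0, v0)); first by apply: map_f; rewrite mem_enum.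
exists (N%:R *: (invmx s *m w), N'%:R *: (r *m q)).
split; first by split; [apply: S1N | apply: S2N'].
rewrite /rep /Gmul; cbn [fst snd]; congr pair.
  rewrite scalemxAr -!mulmxDr /rem_col addrC -vE -/t0 /conj_eta !mulmxA.
  by rewrite (mulmxKV sunit) -etaD subrr eta0 mul1mx.
by rewrite pE mulmxDr scalemxAr addrC.
Qed.

Lemma full_Zrank_commensurable s r nu vr :
  compatible D s r -> compatible D nu vr ->
  Zrank (Zspan (invmx s) `&` Zspan (invmx nu)) n -> Zrank (Zspan r `&` Zspan vr) m ->
  commensurable D (latt s r) (latt nu vr).
Proof.
set S1 := Zspan (invmx s) `&` Zspan (invmx nu).
set S2 := Zspan r `&` Zspan vr.
move=> sr nuvr rk1 rk2.
have Z1 : Zclosed S1 by apply: ZclosedI; apply: Zclosed_Zspan.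
have Z2 : Zclosed S2 by apply: ZclosedI; apply: Zclosed_Zspan.
have [N1 [N1_gt0 S1s]] := full_Zrank_scaled_sub Z1 (@subIsetl _ _ _) rk1.
have [N1' [N1'_gt0 S1nu]] := full_Zrank_scaled_sub Z1 (@subIsetr _ _ _) rk1.
have [N2 [N2_gt0 S2r]] := full_Zrank_scaled_sub Z2 (@subIsetl _ _ _) rk2.
have [N2' [N2'_gt0 S2vr]] := full_Zrank_scaled_sub Z2 (@subIsetr _ _ _) rk2.
have sub : [set g | S1 g.1 /\ S2 g.2] `<=` latt s r `&` latt nu vr.
  by move=> g [[g1s g1nu] [g2r g2vr]]; split; apply/lattE.
split; apply: finite_index_sub sub.
  exact: finite_index_latt_scaled sr N1_gt0 N2_gt0 S1s S2r.
exact: finite_index_latt_scaled nuvr N1'_gt0 N2'_gt0 S1nu S2vr.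
Qed.

End RankToCommensurable.

Theorem mainTheorem3 (R : realType) (n m : nat) (D : 'M[R]_(m, n))
  (hm : (1 <= m)%N) (hmn : (m <= n)%N)
  (hindep : forall c : 'cV[R]_m, \sum_(i < m) c i 0 *: Delta D i = 0 -> c = 0)
  (hnonsing : forall i, Delta D i \in unitmx)
  (htrace : forall i, \tr (Delta D i) = 0)
  (hdistinct : forall (i : 'I_m) (k j : 'I_n), k != j -> D i k != D i j)
  (sigma nu : 'M[R]_n) (rho vrho : 'M[R]_m)
  (hc1 : compatible D sigma rho) (hc2 : compatible D nu vrho) :
  commensurable D (latt sigma rho) (latt nu vrho) <->
  (Zrank (Zspan (invmx sigma) `&` Zspan (invmx nu)) n /\
   Zrank (Zspan rho `&` Zspan vrho) m).
Proof.
split=> [[fi _] | [rk1 rk2]]; first exact: finite_index_full_Zrank fi.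
exact: full_Zrank_commensurable.
Qed.
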